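(* Fix $\varepsilon\in(0,1)$, a positive sequence $\lambda_n\to0$, and a nonzero positive semidefinite $2\times2$ matrix $\mathbf{V}$. There exists a finite constant $h(\mathbf{V},\varepsilon)$ such that, for all sufficiently large $n$, $$\Psi^{-1}(\mathbf{V},\varepsilon+\lambda_n)\subset\Psi^{-1}(\mathbf{V},\varepsilon)+h(\mathbf{V},\varepsilon)\lambda_n\mathbf{1},$$ where $\mathbf{1}=(1,1)^T$ and $A+c\mathbf{1}:=\{\mathbf{a}+c\mathbf{1}:\mathbf{a}\in A\}$.
   Context: For a nonzero positive semidefinite $2\times2$ matrix $\mathbf{V}$ and $\varepsilon\in(0,1)$: $\Psi(z_1,z_2;\mathbf{V}):=\Pr(U_1\le z_1,U_2\le z_2)$ for $\mathbf{U}\sim\mathcal{N}(\mathbf{0},\mathbf{V})$, and $\Psi^{-1}(\mathbf{V},\varepsilon):=\{(z_1,z_2)\in\mathbb{R}^2:\Psi(-z_1,-z_2;\mathbf{V})\ge1-\varepsilon\}$. *)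

From Stdlib Require Import Reals Lra ClassicalEpsilon.
Open Scope R_scope.

Record Mat2 := mkMat2 { m11 : R; m12 : R; m21 : R; m22 : R }.

Definition PSD (V : Mat2) : Prop :=
  m12 V = m21 V /\
  forall x1 x2 : R,
    0 <= x1 * (m11 V * x1 + m12 V * x2) + x2 * (m21 V * x1 + m22 V * x2).

Definition nonzero_mat (V : Mat2) : Prop :=
  ~ (m11 V = 0 /\ m12 V = 0 /\ m21 V = 0 /\ m22 V = 0).

Definition phi (x : R) : R := exp (- (x * x) / 2) / sqrt (2 * PI).

Definition ImproperIntR (f : R -> R) (l : R) : Prop :=
  forall e : R, 0 < e -> exists M : R, forall a b : R, a <= - M -> M <= b ->
    exists pr : Riemann_integrable f a b, Rabs (RiemannInt pr - l) < e.

Definition IntR (f : R -> R) : R := epsilon (inhabits 0) (ImproperIntR f).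

(* Cholesky factor A (lower triangular, A A^T = V for PSD V):
   A = [[a, 0], [b, c]], a = sqrt v11, b = v12 / a, c = sqrt (v22 - v12^2/v11).
   (If v11 = 0 then PSD forces v12 = 0, and Stdlib gives 0/0 = 0.) *)
Definition chol_a (V : Mat2) : R := sqrt (m11 V).
Definition chol_b (V : Mat2) : R := m12 V / sqrt (m11 V).
Definition chol_c (V : Mat2) : R := sqrt (m22 V - m12 V * m12 V / m11 V).

Definition ind2 (p q : R) (z1 z2 : R) : R :=
  if Rle_dec p z1 then (if Rle_dec q z2 then 1 else 0) else 0.

(* Psi(z1,z2;V) = Pr(U1 <= z1, U2 <= z2) with U = A Z ~ N(0,V),
   Z = (Z1,Z2) standard normal; computed as an iterated integral
   against the density phi(x) phi(y). *)
Definition Psi (z1 z2 : R) (V : Mat2) : R :=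
  IntR (fun x => IntR (fun y =>
    phi x * phi y *
    ind2 (chol_a V * x) (chol_b V * x + chol_c V * y) z1 z2)).

Definition PsiInv (V : Mat2) (eps : R) (z : R * R) : Prop :=
  Psi (- fst z) (- snd z) V >= 1 - eps.

From Stdlib Require Import Reals Lra Psatz FunctionalExtensionality ClassicalEpsilon.
From Coquelicot Require Import Coquelicot.
Open Scope R_scope.

(* Write U = (a X, b X + c Y) with X, Y independent standard normals and (a, b, c) the
   Cholesky factor of V, so that Psi(w1, w2) = int phi(x) K(w, x) dx with conditional
   probability K(w, x) = 1[a x <= w1] P(c Y <= w2 - b x).  The heart of the matter is a
   uniform linear growth along the diagonal: for every delta > 0 there is k > 0 such that
   Psi(w + t 1) - Psi(w) >= k t for all t in [0, 1] and all w with
   delta <= Psi(w) <= 1 - delta.  For such w, K(w, .) is large at some x0 and small at some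
   x1 in a window [-M, M] independent of w; between them lies an interval of length
   proportional to t on which the shift raises K by a definite amount (through the normal
   density when c > 0, through a jump of an indicator when c = 0).  Now if z is in
   Psi^{-1}(V, eps + lam_n) with lam_n small, either Psi(-z) >= 1 - eps already, or
   Psi(-z) is in [(1 - eps) / 2, 1 - eps) and the shift t = lam_n / k gains lam_n; so
   h = 1 / k works.  The Gaussian tail bounds needed along the way come from the identity
   (int_0^x exp(-s^2) ds)^2 + int_0^1 exp(-x^2 (1 + t^2)) / (1 + t^2) dt = PI / 4. *)

Lemma ex_derive_continuous_R (f : R -> R) (x : R) : ex_derive f x -> continuous f x.
Proof. apply (ex_derive_continuous (K := R_AbsRing) (V := R_NormedModule)). Qed.

Lemma ex_RInt_continuous_R (f : R -> R) (a b : R) :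
  (forall z, continuous f z) -> ex_RInt f a b.
Proof. intros Hf. apply (ex_RInt_continuous (V := R_CompleteNormedModule)); auto. Qed.

Lemma RInt_scal_R (f : R -> R) (a b k : R) :
  ex_RInt f a b -> RInt (fun x => k * f x) a b = k * RInt f a b.
Proof. apply (RInt_scal (V := R_CompleteNormedModule)). Qed.

Lemma RInt_const_lower (f : R -> R) (a b m : R) : a <= b -> ex_RInt f a b ->
  (forall x, a < x < b -> m <= f x) -> (b - a) * m <= RInt f a b.
Proof.
  intros Hab Hf H. replace ((b - a) * m) with (RInt (fun _ => m) a b).
  - apply RInt_le; auto. apply ex_RInt_const.
  - rewrite RInt_const. unfold scal; simpl; unfold mult; simpl. ring.
Qed.

Lemma Rdiv_le_compat_pos (x y c : R) : 0 < c -> x <= y -> x / c <= y / c.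
Proof. intros Hc H. unfold Rdiv. apply Rmult_le_compat_r; [left; apply Rinv_0_lt_compat |]; auto. Qed.

Lemma exp_le_compat (x y : R) : x <= y -> exp x <= exp y.
Proof. intros [H | ->]; [left; apply exp_increasing, H | lra]. Qed.

(** * The Gaussian integral *)

Definition gauss (t : R) : R := exp (- (t * t)).
Definition gauss_int (x : R) : R := RInt gauss 0 x.
Definition arctan_kernel (x t : R) : R := exp (- (x * x) * (1 + t * t)) / (1 + t * t).
Definition arctan_int (x : R) : R := RInt (arctan_kernel x) 0 1.

Lemma continuous_gauss (x : R) : continuous gauss x.
Proof. apply ex_derive_continuous_R. unfold gauss. auto_derive. auto. Qed.

Lemma ex_RInt_gauss (a b : R) : ex_RInt gauss a b.
Proof. apply ex_RInt_continuous_R, continuous_gauss. Qed.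

Lemma RInt_gauss_lin (k a b : R) :
  RInt (fun y => k * gauss (k * y)) a b = RInt gauss (k * a) (k * b).
Proof.
  rewrite <- (Rplus_0_r (k * a)), <- (Rplus_0_r (k * b)).
  rewrite <- (RInt_comp_lin (V := R_CompleteNormedModule)) by apply ex_RInt_gauss.
  apply RInt_ext. intros y _. unfold scal; simpl; unfold mult; simpl.
  now rewrite Rplus_0_r.
Qed.

Lemma is_derive_gauss_int (x : R) : is_derive gauss_int x (gauss x).
Proof.
  apply is_derive_RInt with 0.
  - apply filter_forall. intros y. apply (RInt_correct (V := R_CompleteNormedModule)), ex_RInt_gauss.
  - apply continuous_gauss.
Qed.

Lemma one_plus_sqr_neq0 (t : R) : 1 + t * t <> 0.
Proof. nra. Qed.

Lemma is_derive_arctan_kernel (x t : R) :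
  is_derive (fun u => arctan_kernel u t) x (- 2 * x * exp (- (x * x) * (1 + t * t))).
Proof. unfold arctan_kernel. auto_derive; [exact I | field; apply one_plus_sqr_neq0]. Qed.

Lemma continuous_arctan_kernel (x t : R) : continuous (arctan_kernel x) t.
Proof. apply ex_derive_continuous_R. unfold arctan_kernel. auto_derive. apply one_plus_sqr_neq0. Qed.

Lemma continuity_2d_arctan_kernel_derive (x t : R) :
  continuity_2d_pt (fun u v => - 2 * u * exp (- (u * u) * (1 + v * v))) x t.
Proof.
  apply continuity_2d_pt_mult.
  - apply continuity_2d_pt_mult; [apply continuity_2d_pt_const | apply continuity_2d_pt_id1].
  - apply continuity_1d_2d_pt_comp; [apply derivable_continuous_pt, derivable_pt_exp |].
    apply continuity_2d_pt_mult.
    + apply continuity_2d_pt_opp, continuity_2d_pt_mult; apply continuity_2d_pt_id1.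
    + apply continuity_2d_pt_plus; [apply continuity_2d_pt_const |].
      apply continuity_2d_pt_mult; apply continuity_2d_pt_id2.
Qed.

(* Substituting [y = x t] turns the differentiated kernel into [gauss_int]. *)
Lemma is_derive_arctan_int (x : R) : is_derive arctan_int x (- 2 * gauss x * gauss_int x).
Proof.
  assert (E : RInt (fun t => Derive (fun u => arctan_kernel u t) x) 0 1
              = - 2 * gauss x * gauss_int x).
  { rewrite (RInt_ext _ (fun t => (- 2 * gauss x) * (x * gauss (x * t)))).
    - rewrite RInt_scal_R.
      + now rewrite RInt_gauss_lin, Rmult_0_r, Rmult_1_r.
      + apply ex_RInt_continuous_R. intros z. apply ex_derive_continuous_R.
        unfold gauss. auto_derive. auto.
    - intros t _.
      replace (Derive (fun u => arctan_kernel u t) x)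
        with (- 2 * x * exp (- (x * x) * (1 + t * t)))
        by (symmetry; apply is_derive_unique, is_derive_arctan_kernel).
      unfold gauss. replace (- (x * x) * (1 + t * t)) with (- (x * x) + - (x * t * (x * t)))
        by ring.
      rewrite exp_plus. simpl. ring. }
  rewrite <- E. apply (is_derive_RInt_param arctan_kernel 0 1 x).
  - apply filter_forall. intros y t _. eexists. apply is_derive_arctan_kernel.
  - intros t _. eapply continuity_2d_pt_ext; [| apply continuity_2d_arctan_kernel_derive].
    intros u v. symmetry. apply is_derive_unique, is_derive_arctan_kernel.
  - apply filter_forall. intros y. apply ex_RInt_continuous_R, continuous_arctan_kernel.
Qed.

Lemma arctan_int_0 : arctan_int 0 = PI / 4.
Proof.
  assert (D : forall t, is_derive atan t (/ (1 + t ^ 2))).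
  { intros t. apply is_derive_Reals, derivable_pt_lim_atan. }
  unfold arctan_int. rewrite (RInt_ext _ (Derive atan)).
  - rewrite RInt_Derive, atan_1, atan_0; [field | |].
    + intros; eexists; apply D.
    + intros z _. apply (continuous_ext (fun t => / (1 + t ^ 2))).
      * intros t. symmetry. apply is_derive_unique, D.
      * apply ex_derive_continuous_R. auto_derive. nra.
  - intros t _. rewrite (is_derive_unique _ _ _ (D t)). unfold arctan_kernel.
    replace (- (0 * 0) * (1 + t * t)) with 0 by ring. rewrite exp_0. simpl. field. nra.
Qed.

Lemma gauss_int_sqr_add_arctan_int (x : R) : gauss_int x * gauss_int x + arctan_int x = PI / 4.
Proof.
  set (h := fun x => gauss_int x * gauss_int x + arctan_int x).
  assert (D : forall z, is_derive h z 0).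
  { intros z. unfold h.
    replace 0 with (gauss z * gauss_int z + gauss_int z * gauss z + - 2 * gauss z * gauss_int z)
      by ring.
    apply (is_derive_plus (K := R_AbsRing) (V := R_NormedModule)).
    - apply (is_derive_mult (K := R_AbsRing)); try apply is_derive_gauss_int.
      intros; apply Rmult_comm.
    - apply is_derive_arctan_int. }
  assert (E := RInt_Derive h 0 x).
  rewrite (RInt_ext _ (fun _ => 0)), RInt_const in E
    by (intros; apply is_derive_unique, D).
  unfold scal in E; simpl in E; unfold mult in E; simpl in E.
  assert (h x = h 0).
  { enough (h x - h 0 = 0) by lra. rewrite <- E; [ring | |].
    - intros; eexists; apply D.
    - intros z _. apply (continuous_ext (fun _ => 0)); [| apply continuous_const].
      intros; symmetry; apply is_derive_unique, D. }
  unfold h in *. rewrite H, <- arctan_int_0. unfold gauss_int. rewrite RInt_point.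
  unfold zero; simpl. ring.
Qed.

Lemma arctan_int_bounds (x : R) : 0 <= arctan_int x <= exp (- (x * x)).
Proof.
  assert (K : forall t, 0 <= arctan_kernel x t <= exp (- (x * x))).
  { intros t. unfold arctan_kernel.
    assert (exp (- (x * x) * (1 + t * t)) <= exp (- (x * x))).
    { apply exp_le_compat; nra. }
    assert (0 < exp (- (x * x) * (1 + t * t))) by apply exp_pos.
    assert (/ (1 + t * t) <= 1) by (rewrite <- Rinv_1; apply Rinv_le_contravar; nra).
    assert (0 < / (1 + t * t)) by (apply Rinv_0_lt_compat; nra).
    unfold Rdiv. nra. }
  assert (I : ex_RInt (arctan_kernel x) 0 1)
    by apply ex_RInt_continuous_R, continuous_arctan_kernel.
  unfold arctan_int. split.
  - apply RInt_ge_0; [lra | exact I | intros; apply K].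
  - replace (exp (- (x * x))) with (RInt (fun _ => exp (- (x * x))) 0 1).
    + apply RInt_le; [lra | exact I | apply ex_RInt_const | intros; apply K].
    + rewrite RInt_const. unfold scal; simpl; unfold mult; simpl. ring.
Qed.

Lemma gauss_int_nonneg (x : R) : 0 <= x -> 0 <= gauss_int x.
Proof.
  intros Hx. apply RInt_ge_0; auto; [apply ex_RInt_gauss |].
  intros; apply Rlt_le, exp_pos.
Qed.

Lemma gauss_int_sqr_bounds (x : R) :
  PI / 4 - exp (- (x * x)) <= gauss_int x * gauss_int x <= PI / 4.
Proof.
  assert (H := gauss_int_sqr_add_arctan_int x). assert (B := arctan_int_bounds x). lra.
Qed.

(** * The standard normal distribution function *)

Lemma PI_gt_2 : 2 < PI.
Proof. assert (H := PI2_1). lra. Qed.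

Lemma phi_pos (x : R) : 0 < phi x.
Proof.
  apply Rdiv_lt_0_compat; [apply exp_pos |].
  apply sqrt_lt_R0. assert (H := PI_gt_2). lra.
Qed.

Lemma phi_opp (x : R) : phi (- x) = phi x.
Proof. unfold phi. now replace (- x * - x) with (x * x) by ring. Qed.

Lemma continuous_phi (x : R) : continuous phi x.
Proof. apply ex_derive_continuous_R. unfold phi. auto_derive. exact I. Qed.

Lemma ex_RInt_phi (a b : R) : ex_RInt phi a b.
Proof. apply ex_RInt_continuous_R, continuous_phi. Qed.

Lemma phi_le_of_abs_le (u r : R) : Rabs u <= r -> phi r <= phi u.
Proof.
  intros H. unfold phi, Rdiv. apply Rmult_le_compat_r.
  - left. apply Rinv_0_lt_compat, sqrt_lt_R0. assert (HPI := PI_gt_2). lra.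
  - apply exp_le_compat.
    assert (u <= Rabs u) by apply Rle_abs.
    assert (- u <= Rabs u) by (rewrite <- Rabs_Ropp; apply Rle_abs).
    nra.
Qed.

(* The N(0,1) distribution function; the constant [/ 2] is [P(X <= 0)]. *)
Definition Phi (x : R) : R := / 2 + RInt phi 0 x.

Lemma Phi_sub (x y : R) : Phi y - Phi x = RInt phi x y.
Proof.
  unfold Phi.
  rewrite <- (RInt_Chasles (V := R_CompleteNormedModule) phi 0 x y) by apply ex_RInt_phi.
  unfold plus; simpl. ring.
Qed.

Lemma RInt_phi_gauss_int (x : R) : RInt phi 0 x = gauss_int (/ sqrt 2 * x) / sqrt PI.
Proof.
  assert (S2 : 0 < sqrt 2) by (apply sqrt_lt_R0; lra).
  assert (SP : 0 < sqrt PI) by (apply sqrt_lt_R0; assert (H := PI_gt_2); lra).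
  unfold gauss_int.
  replace (RInt gauss 0 (/ sqrt 2 * x)) with (RInt gauss (/ sqrt 2 * 0) (/ sqrt 2 * x))
    by now rewrite Rmult_0_r.
  rewrite <- RInt_gauss_lin.
  unfold Rdiv. rewrite <- (Rmult_comm (/ sqrt PI)), <- RInt_scal_R.
  - apply RInt_ext. intros y _. simpl. unfold phi, gauss.
    rewrite sqrt_mult by (assert (H := PI_gt_2); lra).
    replace (- (/ sqrt 2 * y * (/ sqrt 2 * y))) with (- (y * y) / 2).
    + field. lra.
    + replace (/ sqrt 2 * y * (/ sqrt 2 * y)) with (y * y / (sqrt 2 * sqrt 2)) by (field; lra).
      rewrite sqrt_sqrt by lra. field.
  - apply ex_RInt_continuous_R. intros z. apply ex_derive_continuous_R.
    unfold gauss. auto_derive. auto.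
Qed.

Lemma RInt_phi_0_bounds (x : R) : 0 <= x ->
  0 <= RInt phi 0 x <= / 2 /\ / 2 - RInt phi 0 x <= exp (- (x * x) / 2).
Proof.
  intros Hx. rewrite RInt_phi_gauss_int.
  assert (S2 : 0 < sqrt 2) by (apply sqrt_lt_R0; lra).
  assert (P2 := PI_gt_2).
  assert (SP : sqrt PI * sqrt PI = PI) by (apply sqrt_sqrt; lra).
  assert (SP1 : 1 < sqrt PI) by (rewrite <- sqrt_1; apply sqrt_lt_1_alt; lra).
  set (y := / sqrt 2 * x).
  assert (Hy : 0 <= y) by (apply Rmult_le_pos; [left; apply Rinv_0_lt_compat |]; lra).
  assert (Ey : exp (- (y * y)) = exp (- (x * x) / 2)).
  { f_equal. unfold y.
    replace (/ sqrt 2 * x * (/ sqrt 2 * x)) with (x * x / (sqrt 2 * sqrt 2)) by (field; lra).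
    rewrite sqrt_sqrt by lra. field. }
  assert (F0 := gauss_int_nonneg y Hy). assert (Fs := gauss_int_sqr_bounds y).
  rewrite Ey in Fs. set (E := exp (- (x * x) / 2)) in *. assert (E0 : 0 < E) by apply exp_pos.
  set (F := gauss_int y) in *. set (s := sqrt PI) in *.
  assert (F <= s / 2) by nra.
  replace (/ 2 - F / s) with ((s / 2 - F) / s) by (field; lra).
  assert ((s / 2 - F) * (s / 2 + F) <= E) by nra.
  repeat split.
  - apply Rdiv_le_0_compat; lra.
  - apply (Rmult_le_reg_r s); [lra |]. unfold Rdiv. rewrite Rmult_assoc, Rinv_l by lra. lra.
  - apply (Rmult_le_reg_r s); [lra |]. unfold Rdiv at 1.
    rewrite Rmult_assoc, Rinv_l by lra. nra.
Qed.

Lemma RInt_phi_0_opp (x : R) : RInt phi 0 (- x) = - RInt phi 0 x.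
Proof.
  assert (E := RInt_comp_lin (V := R_CompleteNormedModule) phi (-1) 0 0 x).
  rewrite Rmult_0_r, Rplus_0_r in E. replace (-1 * x + 0) with (- x) in E by ring.
  rewrite <- E by apply ex_RInt_phi.
  rewrite (RInt_ext _ (fun y => -1 * phi y)).
  - rewrite RInt_scal_R by apply ex_RInt_phi. simpl. ring.
  - intros y _. simpl. replace (-1 * y + 0) with (- y) by ring. now rewrite phi_opp.
Qed.

Lemma Phi_tail_bounds (M : R) : 0 <= M ->
  Phi (- M) <= exp (- (M * M) / 2) /\ 1 - Phi M <= exp (- (M * M) / 2).
Proof.
  intros HM. destruct (RInt_phi_0_bounds M HM) as [_ B]. unfold Phi. rewrite RInt_phi_0_opp. lra.
Qed.

Lemma Phi_increment_lower (x y r : R) : x <= y -> Rabs x <= r -> Rabs y <= r ->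
  (y - x) * phi r <= Phi y - Phi x.
Proof.
  intros Hxy Hx Hy. rewrite Phi_sub. apply RInt_const_lower; [exact Hxy | apply ex_RInt_phi |].
  intros z Hz. apply phi_le_of_abs_le. apply Rabs_le.
  apply Rabs_le_between in Hx. apply Rabs_le_between in Hy. lra.
Qed.

Lemma Phi_lt (x y : R) : x < y -> Phi x < Phi y.
Proof.
  intros H. set (r := Rmax (Rabs x) (Rabs y)).
  assert (A := Phi_increment_lower x y r (Rlt_le _ _ H) (Rmax_l _ _) (Rmax_r _ _)).
  assert (0 < (y - x) * phi r) by (apply Rmult_lt_0_compat; [lra | apply phi_pos]).
  lra.
Qed.

Lemma Phi_le (x y : R) : x <= y -> Phi x <= Phi y.
Proof. intros [H | ->]; [left; apply Phi_lt, H | lra]. Qed.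

Lemma Phi_bounds (x : R) : 0 < Phi x < 1.
Proof.
  assert (H : forall y, 0 <= y -> 0 <= Phi y <= 1 /\ 0 <= Phi (- y) <= 1).
  { intros y Hy. destruct (RInt_phi_0_bounds y Hy) as [[A B] _].
    unfold Phi. rewrite RInt_phi_0_opp. lra. }
  assert (H' : forall y, 0 <= Phi y <= 1).
  { intros y. destruct (Rle_dec 0 y); [apply H; auto |].
    replace y with (- - y) by ring. apply H. lra. }
  assert (Phi (x - 1) < Phi x) by (apply Phi_lt; lra).
  assert (Phi x < Phi (x + 1)) by (apply Phi_lt; lra).
  assert (L := H' (x - 1)). assert (U := H' (x + 1)). lra.
Qed.

Lemma exp_neg_sqr_half_small (e : R) : 0 < e ->
  exists M, 1 <= M /\ exp (- (M * M) / 2) <= e.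
Proof.
  intros He. set (M := Rmax 1 (2 / e)). exists M.
  assert (M1 : 1 <= M) by apply Rmax_l. assert (M2 : 2 / e <= M) by apply Rmax_r.
  split; [exact M1 |].
  assert (2 <= M * e).
  { apply (Rmult_le_compat_r e) in M2; [| lra].
    unfold Rdiv in M2. rewrite Rmult_assoc, Rinv_l in M2 by lra. lra. }
  replace (- (M * M) / 2) with (- (M * M / 2)) by field. rewrite exp_Ropp.
  assert (X := exp_ineq1_le (M * M / 2)).
  apply (Rmult_le_reg_r (exp (M * M / 2))); [apply exp_pos |].
  rewrite Rinv_l by (apply Rgt_not_eq, exp_pos). nra.
Qed.

Lemma Phi_tails_small (e : R) : 0 < e -> exists M, 1 <= M /\ Phi (- M) <= e /\ 1 - Phi M <= e.
Proof.
  intros He. destruct (exp_neg_sqr_half_small e He) as [M [HM H]]. exists M.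
  destruct (Phi_tail_bounds M) as [A B]; lra.
Qed.

Definition normal_tail (M : R) : R := Phi (- M) + (1 - Phi M).

Lemma normal_tail_nonneg (M : R) : 0 <= normal_tail M.
Proof. unfold normal_tail. destruct (Phi_bounds (- M)), (Phi_bounds M). lra. Qed.

Lemma normal_tail_small (e : R) : 0 < e ->
  exists M, 1 <= M /\ normal_tail M <= e.
Proof.
  intros He. destruct (Phi_tails_small (e / 2)) as [M [HM [H1 H2]]]; [lra |].
  exists M. unfold normal_tail. lra.
Qed.

(** * Improper integrals over the real line *)

Definition locally_integrable (f : R -> R) : Prop := forall a b, ex_RInt f a b.

Definition improper_integral (f : R -> R) (l : R) : Prop :=
  forall e, 0 < e -> exists M, forall a b, a <= - M -> M <= b -> Rabs (RInt f a b - l) < e.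

Definition normally_dominated (f : R -> R) : Prop :=
  locally_integrable f /\ exists C, 0 <= C /\ forall x, Rabs (f x) <= C * phi x.

Lemma ImproperIntR_improper_integral (f : R -> R) (l : R) :
  locally_integrable f -> improper_integral f l -> ImproperIntR f l.
Proof.
  intros Hf H e He. destruct (H e He) as [M HM]. exists M. intros a b Ha Hb.
  exists (ex_RInt_Reals_0 _ _ _ (Hf a b)). rewrite <- RInt_Reals. auto.
Qed.

Lemma ImproperIntR_unique (f : R -> R) (l l' : R) :
  ImproperIntR f l -> ImproperIntR f l' -> l = l'.
Proof.
  intros H H'. destruct (Req_dec l l') as [E | NE]; auto. exfalso.
  set (e := Rabs (l - l') / 2).
  assert (He : 0 < e) by (assert (0 < Rabs (l - l')) by (apply Rabs_pos_lt; lra); unfold e; lra).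
  destruct (H e He) as [M HM]. destruct (H' e He) as [M' HM'].
  set (N := Rmax (Rabs M) (Rabs M')).
  assert (Rabs M <= N) by apply Rmax_l. assert (Rabs M' <= N) by apply Rmax_r.
  assert (M <= Rabs M) by apply Rle_abs. assert (M' <= Rabs M') by apply Rle_abs.
  destruct (HM (- N) N) as [pr P]; try lra.
  destruct (HM' (- N) N) as [pr' P']; try lra.
  rewrite (RiemannInt_P5 pr' pr) in P'.
  assert (Rabs (l - l') <= Rabs (RiemannInt pr - l) + Rabs (RiemannInt pr - l')).
  { replace (l - l') with (- (RiemannInt pr - l) + (RiemannInt pr - l')) by ring.
    eapply Rle_trans; [apply Rabs_triang |]. rewrite Rabs_Ropp. lra. }
  unfold e in *. lra.
Qed.

Lemma IntR_eq (f : R -> R) (l : R) :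
  locally_integrable f -> improper_integral f l -> IntR f = l.
Proof.
  intros Hf H. assert (I := ImproperIntR_improper_integral f l Hf H).
  unfold IntR. apply (ImproperIntR_unique f); [| exact I].
  apply epsilon_spec. exists l; auto.
Qed.

Lemma RInt_Chasles3 (f : R -> R) (a b c d : R) : locally_integrable f ->
  RInt f a d = RInt f a b + RInt f b c + RInt f c d.
Proof.
  intros Hf.
  rewrite <- (RInt_Chasles (V := R_CompleteNormedModule) f a c d) by auto.
  rewrite <- (RInt_Chasles (V := R_CompleteNormedModule) f a b c) by auto.
  reflexivity.
Qed.

Lemma Rabs_RInt_le_Phi (f : R -> R) (C a b : R) : a <= b -> ex_RInt f a b ->
  (forall x, Rabs (f x) <= C * phi x) -> Rabs (RInt f a b) <= C * (Phi b - Phi a).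
Proof.
  intros Hab Hf HC.
  assert (E : RInt (fun x => C * phi x) a b = C * (Phi b - Phi a))
    by (rewrite Phi_sub; apply RInt_scal_R, ex_RInt_phi).
  assert (Ex : ex_RInt (fun x => C * phi x) a b)
    by apply (ex_RInt_scal (V := R_NormedModule)), ex_RInt_phi.
  assert (Ex' : ex_RInt (fun x => - (C * phi x)) a b)
    by (apply (ex_RInt_opp (V := R_NormedModule)); auto).
  apply Rabs_le. split.
  - replace (- (C * (Phi b - Phi a))) with (RInt (fun x => - (C * phi x)) a b)
      by (rewrite (RInt_opp (V := R_CompleteNormedModule)), E by auto; reflexivity).
    apply RInt_le; auto. intros x _. specialize (HC x). apply Rabs_le_between in HC. lra.
  - rewrite <- E. apply RInt_le; auto.
    intros x _. specialize (HC x). apply Rabs_le_between in HC. lra.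
Qed.

Section Dominated.

Variables (f : R -> R) (C : R).
Hypotheses (Hf : locally_integrable f) (HC0 : 0 <= C) (HC : forall x, Rabs (f x) <= C * phi x).

Lemma RInt_tail_le (M a b : R) : 0 <= M -> a <= - M -> M <= b ->
  Rabs (RInt f a b - RInt f (- M) M) <= C * normal_tail M.
Proof.
  intros HM Ha Hb. rewrite (RInt_Chasles3 f a (- M) M b Hf).
  replace (RInt f a (- M) + RInt f (- M) M + RInt f M b - RInt f (- M) M)
    with (RInt f a (- M) + RInt f M b) by ring.
  eapply Rle_trans; [apply Rabs_triang |].
  assert (A := Rabs_RInt_le_Phi f C a (- M) Ha (Hf _ _) HC).
  assert (B := Rabs_RInt_le_Phi f C M b Hb (Hf _ _) HC).
  destruct (Phi_bounds a), (Phi_bounds b). unfold normal_tail. nra.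
Qed.

Lemma RInt_tail_small (e : R) : 0 < e -> exists M, 1 <= M /\
  forall a b, a <= - M -> M <= b -> Rabs (RInt f a b - RInt f (- M) M) <= e.
Proof.
  intros He. destruct (normal_tail_small (e / (C + 1))) as [M [HM HT]].
  { apply Rdiv_lt_0_compat; lra. }
  exists M. split; auto. intros a b Ha Hb.
  eapply Rle_trans; [apply RInt_tail_le; lra |].
  assert (T0 := normal_tail_nonneg M).
  replace e with ((C + 1) * (e / (C + 1))) by (field; lra). nra.
Qed.

Lemma RInt_sym_Cauchy : Cauchy_crit (fun n => RInt f (- INR n) (INR n)).
Proof.
  intros e He. destruct (RInt_tail_small (e / 4)) as [M [HM H]]; [lra |].
  destruct (INR_archimed 1 M) as [N HN]; [lra |].
  exists N. intros n m Hn Hm. unfold Rdist.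
  assert (INR N <= INR n) by (apply le_INR; lia).
  assert (INR N <= INR m) by (apply le_INR; lia).
  assert (A := H (- INR n) (INR n) ltac:(lra) ltac:(lra)).
  assert (B := H (- INR m) (INR m) ltac:(lra) ltac:(lra)).
  replace (RInt f (- INR n) (INR n) - RInt f (- INR m) (INR m)) with
    ((RInt f (- INR n) (INR n) - RInt f (- M) M) - (RInt f (- INR m) (INR m) - RInt f (- M) M))
    by ring.
  eapply Rle_lt_trans; [apply Rabs_triang |]. rewrite Rabs_Ropp. lra.
Qed.

Lemma improper_integral_exists : exists l, improper_integral f l.
Proof.
  destruct (Rcomplete.R_complete _ RInt_sym_Cauchy) as [l Hl]. exists l.
  intros e He. destruct (RInt_tail_small (e / 4)) as [M [HM H]]; [lra |].
  exists M. intros a b Ha Hb.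
  destruct (Hl (e / 2)) as [N0 HN0]; [lra |].
  destruct (INR_archimed 1 (Rmax M (Rmax (- a) b))) as [N HN]; [lra |].
  set (n := max N N0).
  assert (INR N <= INR n) by (apply le_INR; unfold n; lia).
  assert (Rmax M (Rmax (- a) b) >= M) by apply Rle_ge, Rmax_l.
  assert (Rmax M (Rmax (- a) b) >= - a)
    by (apply Rle_ge; eapply Rle_trans; [apply Rmax_l | apply Rmax_r]).
  assert (Rmax M (Rmax (- a) b) >= b)
    by (apply Rle_ge; eapply Rle_trans; [apply Rmax_r | apply Rmax_r]).
  assert (A := H (- INR n) (INR n) ltac:(lra) ltac:(lra)).
  assert (B := H a b Ha Hb).
  assert (D := HN0 n ltac:(unfold n; lia)). unfold R_dist in D.
  replace (RInt f a b - l) with ((RInt f a b - RInt f (- M) M)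
    - (RInt f (- INR n) (INR n) - RInt f (- M) M) + (RInt f (- INR n) (INR n) - l)) by ring.
  eapply Rle_lt_trans; [apply Rabs_triang |].
  assert (Rabs ((RInt f a b - RInt f (- M) M) - (RInt f (- INR n) (INR n) - RInt f (- M) M))
    <= e / 2) by (eapply Rle_trans; [apply Rabs_triang | rewrite Rabs_Ropp; lra]).
  lra.
Qed.

Lemma improper_integral_IntR : improper_integral f (IntR f).
Proof.
  destruct improper_integral_exists as [l Hl]. now rewrite (IntR_eq f l Hf Hl).
Qed.

Lemma IntR_sub_RInt_le (M : R) : 0 <= M ->
  Rabs (IntR f - RInt f (- M) M) <= C * normal_tail M.
Proof.
  intros HM. apply Rnot_lt_le. intros Hlt.
  set (e := Rabs (IntR f - RInt f (- M) M) - C * normal_tail M).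
  destruct (improper_integral_IntR e) as [M' HM']; [unfold e; lra |].
  set (N := Rmax M (Rabs M')).
  assert (M <= N) by apply Rmax_l.
  assert (M' <= N) by (eapply Rle_trans; [apply Rle_abs | apply Rmax_r]).
  specialize (HM' (- N) N ltac:(lra) ltac:(lra)).
  assert (A := RInt_tail_le M (- N) N HM ltac:(lra) ltac:(lra)).
  assert (Rabs (IntR f - RInt f (- M) M)
    <= Rabs (RInt f (- N) N - IntR f) + Rabs (RInt f (- N) N - RInt f (- M) M)).
  { replace (IntR f - RInt f (- M) M)
      with (- (RInt f (- N) N - IntR f) + (RInt f (- N) N - RInt f (- M) M)) by ring.
    eapply Rle_trans; [apply Rabs_triang |]. rewrite Rabs_Ropp. lra. }
  unfold e in *. lra.
Qed.

Lemma RInt_le_IntR (p q : R) : (forall x, 0 <= f x) -> p <= q -> RInt f p q <= IntR f.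
Proof.
  intros Hpos Hpq. apply Rnot_lt_le. intros Hlt.
  destruct (improper_integral_IntR (RInt f p q - IntR f)) as [M HM]; [lra |].
  set (N := Rmax (Rabs M) (Rmax (Rabs p) (Rabs q))).
  assert (Rabs M <= N) by apply Rmax_l.
  assert (Hp : Rabs p <= N) by (eapply Rle_trans; [apply Rmax_l | apply Rmax_r]).
  assert (Hq : Rabs q <= N) by (eapply Rle_trans; [apply Rmax_r | apply Rmax_r]).
  assert (M <= Rabs M) by apply Rle_abs.
  apply Rabs_le_between in Hp. apply Rabs_le_between in Hq.
  specialize (HM (- N) N ltac:(lra) ltac:(lra)). apply Rabs_lt_between in HM.
  assert (RInt f p q <= RInt f (- N) N).
  { rewrite (RInt_Chasles3 f (- N) p q N Hf).
    assert (0 <= RInt f (- N) p) by (apply RInt_ge_0; auto; lra).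
    assert (0 <= RInt f q N) by (apply RInt_ge_0; auto; lra).
    lra. }
  lra.
Qed.

End Dominated.

Lemma locally_integrable_minus (f g : R -> R) :
  locally_integrable f -> locally_integrable g -> locally_integrable (fun x => f x - g x).
Proof. intros Hf Hg a b. apply (ex_RInt_minus (V := R_NormedModule)); auto. Qed.

Lemma locally_integrable_scal (f : R -> R) (k : R) :
  locally_integrable f -> locally_integrable (fun x => k * f x).
Proof. intros Hf a b. apply (ex_RInt_scal (V := R_NormedModule) f a b k); auto. Qed.

Lemma improper_integral_minus (f g : R -> R) (l m : R) :
  locally_integrable f -> locally_integrable g -> improper_integral f l -> improper_integral g m ->
  improper_integral (fun x => f x - g x) (l - m).
Proof.
  intros Hf Hg Hl Hm e He.
  destruct (Hl (e / 2)) as [M1 HM1]; [lra |]. destruct (Hm (e / 2)) as [M2 HM2]; [lra |].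
  exists (Rmax M1 M2). intros a b Ha Hb.
  assert (M1 <= Rmax M1 M2) by apply Rmax_l. assert (M2 <= Rmax M1 M2) by apply Rmax_r.
  rewrite (RInt_minus (V := R_CompleteNormedModule)) by auto. unfold minus, plus, opp; simpl.
  specialize (HM1 a b ltac:(lra) ltac:(lra)). specialize (HM2 a b ltac:(lra) ltac:(lra)).
  replace (RInt f a b + - RInt g a b - (l - m)) with ((RInt f a b - l) - (RInt g a b - m))
    by ring.
  eapply Rle_lt_trans; [apply Rabs_triang |]. rewrite Rabs_Ropp. lra.
Qed.

Lemma improper_integral_scal (f : R -> R) (k l : R) :
  locally_integrable f -> improper_integral f l -> improper_integral (fun x => k * f x) (k * l).
Proof.
  intros Hf H e He. assert (K0 := Rabs_pos k).
  destruct (H (e / (Rabs k + 1))) as [M HM]; [apply Rdiv_lt_0_compat; lra |].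
  exists M. intros a b Ha Hb. specialize (HM a b Ha Hb).
  rewrite RInt_scal_R by apply Hf.
  replace (k * RInt f a b - k * l) with (k * (RInt f a b - l)) by ring. rewrite Rabs_mult.
  apply Rle_lt_trans with (Rabs k * (e / (Rabs k + 1))).
  - apply Rmult_le_compat_l; lra.
  - apply (Rmult_lt_reg_r (Rabs k + 1)); [lra |].
    replace (Rabs k * (e / (Rabs k + 1)) * (Rabs k + 1)) with (Rabs k * e) by (field; lra).
    nra.
Qed.

Lemma normally_dominated_minus (f g : R -> R) :
  normally_dominated f -> normally_dominated g -> normally_dominated (fun x => f x - g x).
Proof.
  intros [Hf [C [C0 HC]]] [Hg [D [D0 HD]]].
  split; [apply locally_integrable_minus; auto |].
  exists (C + D). split; [lra |]. intros x.
  eapply Rle_trans; [apply Rabs_triang |]. rewrite Rabs_Ropp.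
  specialize (HC x). specialize (HD x). lra.
Qed.

Lemma IntR_minus (f g : R -> R) : normally_dominated f -> normally_dominated g ->
  IntR (fun x => f x - g x) = IntR f - IntR g.
Proof.
  intros [Hf [C [C0 HC]]] [Hg [D [D0 HD]]].
  apply IntR_eq; [apply locally_integrable_minus; auto |].
  apply improper_integral_minus; auto;
    [apply (improper_integral_IntR f C) | apply (improper_integral_IntR g D)]; auto.
Qed.

Lemma IntR_scal (f : R -> R) (k : R) : normally_dominated f ->
  IntR (fun x => k * f x) = k * IntR f.
Proof.
  intros [Hf [C [C0 HC]]]. apply IntR_eq; [apply locally_integrable_scal; auto |].
  apply improper_integral_scal; auto. apply (improper_integral_IntR f C); auto.
Qed.

Definition indic_le (x y : R) : R := if Rle_dec x y then 1 else 0.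

Lemma indic_le_1 (x y : R) : x <= y -> indic_le x y = 1.
Proof. intros. unfold indic_le. destruct Rle_dec; lra. Qed.

Lemma indic_le_0 (x y : R) : y < x -> indic_le x y = 0.
Proof. intros. unfold indic_le. destruct Rle_dec; lra. Qed.

Lemma indic_le_bounds (x y : R) : 0 <= indic_le x y <= 1.
Proof. unfold indic_le. destruct Rle_dec; lra. Qed.

Lemma indic_le_mono (x y y' : R) : y <= y' -> indic_le x y <= indic_le x y'.
Proof. intros. unfold indic_le. destruct Rle_dec, Rle_dec; lra. Qed.

Lemma indic_le_0_sub (x y : R) : indic_le 0 (y - x) = indic_le x y.
Proof. unfold indic_le. destruct Rle_dec, Rle_dec; auto; lra. Qed.

Lemma indic_le_scal (c x y : R) : 0 < c -> indic_le (c * x) y = indic_le x (y / c).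
Proof.
  intros Hc. unfold indic_le.
  destruct (Rle_dec (c * x) y) as [H | H], (Rle_dec x (y / c)) as [H' | H']; auto;
    exfalso; [apply H' | apply H].
  - apply (Rmult_le_reg_l c); [lra |]. now replace (c * (y / c)) with y by (field; lra).
  - apply (Rmult_le_compat_l c) in H'; [| lra].
    now replace (c * (y / c)) with y in H' by (field; lra).
Qed.

Lemma indic_le_scal_neg (c x y : R) : c < 0 -> indic_le (c * x) y = indic_le (y / c) x.
Proof.
  intros Hc. unfold indic_le.
  destruct (Rle_dec (c * x) y) as [H | H], (Rle_dec (y / c) x) as [H' | H']; auto;
    exfalso; [apply H' | apply H].
  - apply (Rmult_le_reg_l (- c)); [lra |].
    replace (- c * (y / c)) with (- y) by (field; lra). lra.
  - apply (Rmult_le_compat_neg_l c) in H'; [| lra].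
    replace (c * (y / c)) with y in H' by (field; lra). lra.
Qed.

Lemma ind2_indic_le (p q z1 z2 : R) : ind2 p q z1 z2 = indic_le p z1 * indic_le q z2.
Proof. unfold ind2, indic_le. destruct Rle_dec, Rle_dec; ring. Qed.

Lemma locally_integrable_ext (f g : R -> R) :
  (forall x, f x = g x) -> locally_integrable f -> locally_integrable g.
Proof. intros E H a b. apply (ex_RInt_ext (V := R_NormedModule) f); auto. Qed.

Lemma locally_integrable_continuous (f : R -> R) :
  (forall x, continuous f x) -> locally_integrable f.
Proof. intros H a b. apply ex_RInt_continuous_R, H. Qed.

Lemma locally_integrable_phi : locally_integrable phi.
Proof. exact ex_RInt_phi. Qed.

Lemma locally_integrable_glue (f g1 g2 : R -> R) (p : R) :
  locally_integrable g1 -> locally_integrable g2 ->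
  (forall x, x < p -> f x = g1 x) -> (forall x, p < x -> f x = g2 x) -> locally_integrable f.
Proof.
  intros H1 H2 E1 E2.
  assert (S : forall g a b, locally_integrable g ->
    (forall x, Rmin a b < x < Rmax a b -> f x = g x) -> ex_RInt f a b).
  { intros g a b Hg E. apply (ex_RInt_ext (V := R_NormedModule) g); [| apply Hg].
    intros; symmetry; auto. }
  assert (Left : forall a b, a <= p -> b <= p -> ex_RInt f a b).
  { intros a b Ha Hb. apply (S g1); auto. intros x Hx. apply E1.
    assert (Rmax a b <= p) by (apply Rmax_lub; auto). lra. }
  assert (Right : forall a b, p <= a -> p <= b -> ex_RInt f a b).
  { intros a b Ha Hb. apply (S g2); auto. intros x Hx. apply E2.
    assert (p <= Rmin a b) by (apply Rmin_glb; auto). lra. }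
  intros a b. apply (ex_RInt_Chasles (V := R_NormedModule) f a p b).
  - destruct (Rle_dec a p); [apply Left | apply Right]; lra.
  - destruct (Rle_dec p b); [apply Right | apply Left]; lra.
Qed.

Lemma locally_integrable_mul_indic_le (h : R -> R) (al be : R) :
  locally_integrable h -> locally_integrable (fun x => h x * indic_le (al * x) be).
Proof.
  intros Hh. assert (Z : locally_integrable (fun _ => 0)) by (intros a b; apply ex_RInt_const).
  destruct (Rtotal_order al 0) as [Hn | [-> | Hp]].
  - apply (locally_integrable_glue _ (fun _ => 0) h (be / al) Z Hh); intros x Hx;
      rewrite indic_le_scal_neg by lra; [rewrite indic_le_0 | rewrite indic_le_1]; lra.
  - apply (locally_integrable_ext (fun x => indic_le 0 be * h x)).
    + intros x. rewrite Rmult_0_l. ring.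
    + apply locally_integrable_scal, Hh.
  - apply (locally_integrable_glue _ h (fun _ => 0) (be / al) Hh Z); intros x Hx;
      rewrite indic_le_scal by lra; [rewrite indic_le_1 | rewrite indic_le_0]; lra.
Qed.

Lemma locally_integrable_phi_indic_le (p : R) :
  locally_integrable (fun y => phi y * indic_le y p).
Proof.
  apply (locally_integrable_ext (fun y => phi y * indic_le (1 * y) p)).
  - intros y. now rewrite Rmult_1_l.
  - apply locally_integrable_mul_indic_le, locally_integrable_phi.
Qed.

Lemma improper_integral_phi_indic_le (p : R) :
  improper_integral (fun y => phi y * indic_le y p) (Phi p).
Proof.
  intros e He. destruct (Phi_tails_small (e / 2)) as [M [HM [H1 H2]]]; [lra |].
  exists (Rmax M (Rabs p)). intros a b Ha Hb.
  assert (M <= Rmax M (Rabs p)) by apply Rmax_l.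
  assert (Hp : Rabs p <= Rmax M (Rabs p)) by apply Rmax_r. apply Rabs_le_between in Hp.
  rewrite <- (RInt_Chasles (V := R_CompleteNormedModule) _ a p b)
    by apply locally_integrable_phi_indic_le.
  rewrite (RInt_ext _ phi a p), (RInt_ext _ (fun _ => 0) p b), RInt_const.
  - unfold scal, plus; simpl; unfold mult; simpl. rewrite <- Phi_sub.
    assert (Phi a <= Phi (- M)) by (apply Phi_le; lra). destruct (Phi_bounds a).
    apply Rabs_lt_between. lra.
  - intros x Hx. rewrite Rmin_left, Rmax_right in Hx by lra. simpl. rewrite indic_le_0; [ring | lra].
  - intros x Hx. rewrite Rmin_left, Rmax_right in Hx by lra. simpl. rewrite indic_le_1; [ring | lra].
Qed.

Lemma IntR_phi_indic_le (p : R) : IntR (fun y => phi y * indic_le y p) = Phi p.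
Proof.
  apply IntR_eq; [apply locally_integrable_phi_indic_le | apply improper_integral_phi_indic_le].
Qed.

Lemma IntR_phi : IntR phi = 1.
Proof.
  apply IntR_eq; [apply locally_integrable_phi |].
  intros e He. destruct (Phi_tails_small (e / 4)) as [M [HM [H1 H2]]]; [lra |].
  exists M. intros a b Ha Hb. rewrite <- Phi_sub.
  assert (Phi a <= Phi (- M)) by (apply Phi_le; lra).
  assert (Phi M <= Phi b) by (apply Phi_le; lra).
  destruct (Phi_bounds a), (Phi_bounds b).
  apply Rabs_lt_between. lra.
Qed.

Lemma normally_dominated_phi_mul (k : R -> R) :
  locally_integrable (fun y => phi y * k y) -> (forall y, 0 <= k y <= 1) ->
  normally_dominated (fun y => phi y * k y).
Proof.
  intros L H. split; auto. exists 1. split; [lra |]. intros y.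
  assert (P := phi_pos y). destruct (H y). rewrite Rabs_right by nra. nra.
Qed.

Lemma continuous_Phi (x : R) : continuous Phi x.
Proof.
  apply ex_derive_continuous_R. eexists. unfold Phi.
  apply (is_derive_plus (K := R_AbsRing) (V := R_NormedModule) (fun _ => / 2)).
  - apply (is_derive_const (K := R_AbsRing) (V := R_NormedModule)).
  - apply is_derive_RInt with 0; [| apply continuous_phi].
    apply filter_forall. intros y. apply (RInt_correct (V := R_CompleteNormedModule)), ex_RInt_phi.
Qed.

(** * The orthant probability as a one-dimensional integral *)

(* [P(c Y <= s)] for [Y ~ N(0,1)] and [c >= 0]. *)
Definition scaled_normal_cdf (c s : R) : R :=
  if Rlt_dec 0 c then Phi (s / c) else indic_le 0 s.

(* [P(a X <= w1, b X + c Y <= w2 | X = x)] for independent standard normals [X], [Y]. *)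
Definition orthant_cond (a b c w1 w2 x : R) : R :=
  indic_le (a * x) w1 * scaled_normal_cdf c (w2 - b * x).

Definition orthant_prob (a b c w1 w2 : R) : R :=
  IntR (fun x => phi x * orthant_cond a b c w1 w2 x).

Lemma scaled_normal_cdf_bounds (c s : R) : 0 <= scaled_normal_cdf c s <= 1.
Proof.
  unfold scaled_normal_cdf. destruct Rlt_dec; [| apply indic_le_bounds].
  destruct (Phi_bounds (s / c)). lra.
Qed.

Lemma scaled_normal_cdf_mono (c s s' : R) : s <= s' ->
  scaled_normal_cdf c s <= scaled_normal_cdf c s'.
Proof.
  intros H. unfold scaled_normal_cdf. destruct Rlt_dec; [| apply indic_le_mono; auto].
  apply Phi_le, Rdiv_le_compat_pos; auto.
Qed.

Lemma orthant_cond_bounds (a b c w1 w2 x : R) : 0 <= orthant_cond a b c w1 w2 x <= 1.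
Proof.
  unfold orthant_cond.
  destruct (indic_le_bounds (a * x) w1), (scaled_normal_cdf_bounds c (w2 - b * x)).
  split; nra.
Qed.

Lemma orthant_cond_shift_mono (a b c w1 w2 t x : R) : 0 <= t ->
  orthant_cond a b c w1 w2 x <= orthant_cond a b c (w1 + t) (w2 + t) x.
Proof.
  intros Ht. unfold orthant_cond.
  assert (A := indic_le_mono (a * x) w1 (w1 + t) ltac:(lra)).
  assert (B := scaled_normal_cdf_mono c (w2 - b * x) (w2 + t - b * x) ltac:(lra)).
  destruct (indic_le_bounds (a * x) w1), (scaled_normal_cdf_bounds c (w2 - b * x)).
  apply Rmult_le_compat; lra.
Qed.

Lemma orthant_cond_pos (a b c w1 w2 x : R) : 0 < c ->
  orthant_cond a b c w1 w2 x = indic_le (a * x) w1 * Phi ((w2 - b * x) / c).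
Proof. intros. unfold orthant_cond, scaled_normal_cdf. destruct Rlt_dec; [reflexivity | lra]. Qed.

Lemma orthant_cond_0 (a b w1 w2 x : R) :
  orthant_cond a b 0 w1 w2 x = indic_le (a * x) w1 * indic_le (b * x) w2.
Proof.
  unfold orthant_cond, scaled_normal_cdf. destruct Rlt_dec; [lra |].
  now rewrite indic_le_0_sub.
Qed.

Lemma locally_integrable_orthant (a b c w1 w2 : R) :
  locally_integrable (fun x => phi x * orthant_cond a b c w1 w2 x).
Proof.
  destruct (Rlt_dec 0 c) as [Hc | Hc].
  - apply (locally_integrable_ext
      (fun x => phi x * Phi ((- b / c) * x + w2 / c) * indic_le (a * x) w1)).
    + intros x. rewrite orthant_cond_pos by exact Hc.
      replace ((w2 - b * x) / c) with (- b / c * x + w2 / c) by (field; lra). ring.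
    + apply locally_integrable_mul_indic_le, locally_integrable_continuous. intros x.
      apply (continuous_mult (K := R_AbsRing)); [apply continuous_phi |].
      apply (continuous_comp (U := R_UniformSpace) (fun x => - b / c * x + w2 / c) Phi);
        [apply ex_derive_continuous_R; auto_derive; auto | apply continuous_Phi].
  - apply (locally_integrable_ext (fun x => phi x * indic_le (a * x) w1 * indic_le (b * x) w2)).
    + intros x. unfold orthant_cond, scaled_normal_cdf. destruct Rlt_dec; [lra |].
      rewrite indic_le_0_sub. ring.
    + do 2 apply locally_integrable_mul_indic_le. apply locally_integrable_phi.
Qed.

Lemma normally_dominated_orthant (a b c w1 w2 : R) :
  normally_dominated (fun x => phi x * orthant_cond a b c w1 w2 x).
Proof.
  apply normally_dominated_phi_mul; [apply locally_integrable_orthant |].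
  intros; apply orthant_cond_bounds.
Qed.

Lemma IntR_inner (a b c z1 z2 x : R) : 0 <= c ->
  IntR (fun y => phi x * phi y * ind2 (a * x) (b * x + c * y) z1 z2)
  = phi x * orthant_cond a b c z1 z2 x.
Proof.
  intros Hc.
  replace (fun y => phi x * phi y * ind2 (a * x) (b * x + c * y) z1 z2)
    with (fun y => (phi x * indic_le (a * x) z1) * (phi y * indic_le (c * y) (z2 - b * x))).
  2: { apply functional_extensionality. intros y. rewrite ind2_indic_le.
       replace (b * x + c * y) with (z2 - (z2 - b * x - c * y)) by ring.
       rewrite <- (indic_le_0_sub (z2 - (z2 - b * x - c * y)) z2).
       rewrite <- (indic_le_0_sub (c * y) (z2 - b * x)).
       replace (z2 - (z2 - (z2 - b * x - c * y))) with (z2 - b * x - c * y) by ring. ring. }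
  rewrite IntR_scal.
  2: { apply normally_dominated_phi_mul; [| intros; apply indic_le_bounds].
       apply locally_integrable_mul_indic_le, locally_integrable_phi. }
  unfold orthant_cond, scaled_normal_cdf. destruct (Rlt_dec 0 c) as [Hc' | Hc'].
  - replace (fun y => phi y * indic_le (c * y) (z2 - b * x))
      with (fun y => phi y * indic_le y ((z2 - b * x) / c))
      by (apply functional_extensionality; intros y; now rewrite indic_le_scal).
    rewrite IntR_phi_indic_le. ring.
  - replace c with 0 by lra.
    replace (fun y => phi y * indic_le (0 * y) (z2 - b * x))
      with (fun y => indic_le 0 (z2 - b * x) * phi y).
    + rewrite IntR_scal, IntR_phi; [ring |].
      split; [apply locally_integrable_phi |]. exists 1. split; [lra |]. intros y.
      assert (P := phi_pos y). rewrite Rabs_right; lra.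
    + apply functional_extensionality. intros y. rewrite Rmult_0_l. ring.
Qed.

Lemma Psi_orthant_prob (V : Mat2) (z1 z2 : R) :
  Psi z1 z2 V = orthant_prob (chol_a V) (chol_b V) (chol_c V) z1 z2.
Proof.
  unfold Psi, orthant_prob. f_equal. apply functional_extensionality. intros x.
  apply IntR_inner. apply sqrt_pos.
Qed.

(** * Growth of the orthant probability along the diagonal *)

Lemma exists_gt_of_RInt_phi_mul_gt (k : R -> R) (M theta : R) :
  0 <= M -> 0 <= theta -> locally_integrable (fun x => phi x * k x) ->
  theta < RInt (fun x => phi x * k x) (- M) M -> exists x, - M < x < M /\ theta < k x.
Proof.
  intros HM Ht L H. apply NNPP. intros N.
  assert (Hk : forall x, - M < x < M -> k x <= theta).
  { intros x Hx. apply Rnot_lt_le. intros Hlt. apply N. exists x. auto. }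
  assert (Hle : RInt (fun x => phi x * k x) (- M) M <= RInt (fun x => theta * phi x) (- M) M).
  { apply RInt_le; [lra | apply L | apply locally_integrable_scal, locally_integrable_phi |].
    intros x Hx. specialize (Hk x Hx). assert (X := phi_pos x). nra. }
  rewrite RInt_scal_R, <- Phi_sub in Hle by apply ex_RInt_phi.
  destruct (Phi_bounds M), (Phi_bounds (- M)). nra.
Qed.

(* Where [a x <= w1, b x <= w2] holds at [x0] but fails at [x1], the boundary of this
   interval lies between them; shifting [w] by [t] moves it by at least [s]. *)
Lemma two_halfline_gap (a b w1 w2 t s M x0 x1 : R) :
  0 < a -> 0 <= s <= 1 -> a * s <= t -> Rabs b * s <= t ->
  - M < x0 < M -> - M < x1 < M -> a * x0 <= w1 -> b * x0 <= w2 ->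
  w1 < a * x1 \/ w2 < b * x1 ->
  exists l, - (M + 1) <= l /\ l + s <= M + 1 /\ forall x, l < x < l + s ->
    (w1 < a * x \/ w2 < b * x) /\ a * x <= w1 + t /\ b * x <= w2 + t.
Proof.
  intros Ha Hs Has Hbs Hx0 Hx1 A0 B0 W.
  assert (Hb := Rle_abs b). assert (Hb' : - b <= Rabs b) by (rewrite <- Rabs_Ropp; apply Rle_abs).
  set (xi := w1 / a). assert (Exi : a * xi = w1) by (unfold xi; field; lra).
  destruct (Rle_dec (a * x1) w1) as [A1 | A1].
  - destruct W as [W | W]; [lra |].
    assert (Hb0 : b <> 0) by (intros ->; lra).
    set (ze := w2 / b). assert (Eze : b * ze = w2) by (unfold ze; field; lra).
    destruct (Rlt_dec b 0) as [Hn | Hp].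
    + exists (ze - s). assert (ze <= x0) by nra. assert (x1 < ze) by nra.
      split; [lra | split; [lra |]]. intros x Hx. split; [right; nra | split; nra].
    + exists ze. assert (x0 <= ze) by nra. assert (ze < x1) by nra.
      split; [lra | split; [lra |]]. intros x Hx. split; [right; nra | split; nra].
  - assert (x0 <= xi) by nra. assert (xi < x1) by nra.
    destruct (Rle_dec b 0) as [Hn | Hp].
    + exists xi. split; [lra | split; [lra |]]. intros x Hx. split; [left; nra | split; nra].
    + set (ze := w2 / b). assert (Eze : b * ze = w2) by (unfold ze; field; lra).
      assert (x0 <= ze) by nra.
      destruct (Rle_dec xi ze).
      * exists xi. split; [lra | split; [lra |]]. intros x Hx. split; [left; nra | split; nra].
      * exists ze. split; [lra | split; [lra |]]. intros x Hx. split; [right; nra | split; nra].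
Qed.

Section Orthant.

Variables (a b c : R).

Let K (w1 w2 x : R) : R := orthant_cond a b c w1 w2 x.
Let P (w1 w2 : R) : R := orthant_prob a b c w1 w2.

Lemma orthant_prob_shift_sub (w1 w2 t : R) :
  P (w1 + t) (w2 + t) - P w1 w2 = IntR (fun x => phi x * K (w1 + t) (w2 + t) x - phi x * K w1 w2 x).
Proof.
  unfold P, orthant_prob. symmetry.
  apply (IntR_minus (fun x => phi x * K (w1 + t) (w2 + t) x) (fun x => phi x * K w1 w2 x));
    apply normally_dominated_orthant.
Qed.

Lemma normally_dominated_orthant_shift (w1 w2 t : R) :
  normally_dominated (fun x => phi x * K (w1 + t) (w2 + t) x - phi x * K w1 w2 x).
Proof. apply normally_dominated_minus; apply normally_dominated_orthant. Qed.

Lemma orthant_prob_shift_mono (w1 w2 t : R) : 0 <= t -> P w1 w2 <= P (w1 + t) (w2 + t).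
Proof.
  intros Ht. enough (0 <= P (w1 + t) (w2 + t) - P w1 w2) by lra.
  rewrite orthant_prob_shift_sub.
  destruct (normally_dominated_orthant_shift w1 w2 t) as [L [C [C0 HC]]].
  eapply Rle_trans; [| apply (RInt_le_IntR _ C L C0 HC 0 0)].
  - rewrite RInt_point. unfold zero; simpl. lra.
  - intros x. assert (X := phi_pos x).
    assert (Y := orthant_cond_shift_mono a b c w1 w2 t x Ht). unfold K. nra.
  - lra.
Qed.

Lemma orthant_prob_shift_lower (w1 w2 t l len beta B : R) :
  0 <= t -> 0 <= len -> 0 <= beta -> - B <= l -> l + len <= B ->
  (forall x, l < x < l + len -> beta <= K (w1 + t) (w2 + t) x - K w1 w2 x) ->
  len * beta * phi B <= P (w1 + t) (w2 + t) - P w1 w2.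
Proof.
  intros Ht Hlen Hb Hl1 Hl2 H. rewrite orthant_prob_shift_sub.
  destruct (normally_dominated_orthant_shift w1 w2 t) as [L [C [C0 HC]]].
  eapply Rle_trans; [| apply (RInt_le_IntR _ C L C0 HC l (l + len))].
  - replace (len * beta * phi B) with ((l + len - l) * (beta * phi B)) by ring.
    apply RInt_const_lower; [lra | apply L |].
    intros x Hx. specialize (H x Hx).
    assert (phi B <= phi x) by (apply phi_le_of_abs_le, Rabs_le; lra).
    assert (P0 := phi_pos B). nra.
  - intros x. assert (X := phi_pos x). assert (Y := orthant_cond_shift_mono a b c w1 w2 t x Ht).
    unfold K. nra.
  - lra.
Qed.

Lemma orthant_prob_sub_tail_le (w1 w2 M : R) : 0 <= M ->
  P w1 w2 - normal_tail M <= RInt (fun x => phi x * K w1 w2 x) (- M) M.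
Proof.
  intros HM.
  assert (T : Rabs (P w1 w2 - RInt (fun x => phi x * K w1 w2 x) (- M) M) <= 1 * normal_tail M).
  { apply IntR_sub_RInt_le; [apply locally_integrable_orthant | lra | | exact HM].
    intros x. assert (X := phi_pos x). destruct (orthant_cond_bounds a b c w1 w2 x).
    unfold K. rewrite Rabs_right by nra. nra. }
  apply Rabs_le_between in T. lra.
Qed.

Lemma orthant_prob_compl_sub_tail_le (w1 w2 M : R) : 0 <= M ->
  1 - normal_tail M - P w1 w2 <= RInt (fun x => phi x * (1 - K w1 w2 x)) (- M) M.
Proof.
  intros HM.
  rewrite (RInt_ext _ (fun x => minus (phi x) (phi x * K w1 w2 x)))
    by (intros x _; unfold minus, plus, opp; simpl; ring).
  rewrite (RInt_minus (V := R_CompleteNormedModule));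
    [| apply ex_RInt_phi | apply locally_integrable_orthant].
  unfold minus, plus, opp; simpl. rewrite <- Phi_sub.
  assert (RInt (fun x => phi x * K w1 w2 x) (- M) M <= P w1 w2).
  { destruct (normally_dominated_orthant a b c w1 w2) as [L [C [C0 HC]]].
    apply (RInt_le_IntR _ C L C0 HC); [| lra].
    intros x. assert (X := phi_pos x). destruct (orthant_cond_bounds a b c w1 w2 x).
    unfold K. nra. }
  unfold normal_tail. lra.
Qed.

Lemma orthant_cond_witnesses (delta : R) : 0 < delta -> exists M, 1 <= M /\
  forall w1 w2, delta <= P w1 w2 <= 1 - delta ->
  exists x0 x1, - M < x0 < M /\ - M < x1 < M /\
    delta / 2 < K w1 w2 x0 /\ delta / 2 < 1 - K w1 w2 x1.
Proof.
  intros Hd. destruct (normal_tail_small (delta / 4)) as [M [HM HT]]; [lra |].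
  exists M. split; [exact HM |]. intros w1 w2 HP.
  assert (A := orthant_prob_sub_tail_le w1 w2 M ltac:(lra)).
  assert (B := orthant_prob_compl_sub_tail_le w1 w2 M ltac:(lra)).
  destruct (exists_gt_of_RInt_phi_mul_gt (K w1 w2) M (delta / 2)) as [x0 [Hx0 K0]];
    [lra | lra | apply locally_integrable_orthant | lra |].
  destruct (exists_gt_of_RInt_phi_mul_gt (fun x => 1 - K w1 w2 x) M (delta / 2))
    as [x1 [Hx1 K1]]; [lra | lra | | lra |].
  { apply (locally_integrable_ext (fun x => phi x - phi x * K w1 w2 x)); [intros; ring |].
    apply locally_integrable_minus; [apply locally_integrable_phi | apply locally_integrable_orthant]. }
  exists x0, x1. auto.
Qed.

Lemma orthant_shift_increment_interior (w1 w2 t M N x0 x1 : R) :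
  0 <= a -> 0 < c -> 0 <= t <= 1 -> 0 <= M -> 0 <= N ->
  - M < x0 < M -> - M < x1 < M -> a * x0 <= w1 ->
  - N < (w2 - b * x0) / c -> (w2 - b * x1) / c < N ->
  t * (phi (N + (Rabs b * (2 * M + 1) + 1) / c) / c) * phi (M + 1)
  <= P (w1 + t) (w2 + t) - P w1 w2.
Proof.
  intros Ha Hc Ht HM HN Hx0 Hx1 A0 Q0 Q1.
  set (r := N + (Rabs b * (2 * M + 1) + 1) / c).
  replace (t * (phi r / c) * phi (M + 1)) with (1 * (t / c * phi r) * phi (M + 1))
    by (field; lra).
  apply orthant_prob_shift_lower with (l := x0 - 1); try lra.
  { apply Rmult_le_pos; [apply Rdiv_le_0_compat | left; apply phi_pos]; lra. }
  intros x Hx. unfold K. rewrite !orthant_cond_pos, !indic_le_1 by (lra || nra).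
  set (u := (w2 - b * x) / c).
  replace ((w2 + t - b * x) / c) with (u + t / c) by (unfold u; field; lra).
  replace (1 * Phi (u + t / c) - 1 * Phi u) with (Phi (u + t / c) - Phi u) by ring.
  replace (t / c * phi r) with ((u + t / c - u) * phi r) by ring.
  assert (Hb0 : Rabs (b * (x0 - x)) <= Rabs b * (2 * M + 1)).
  { rewrite Rabs_mult. apply Rmult_le_compat_l; [apply Rabs_pos | apply Rabs_le; lra]. }
  assert (Hb1 : Rabs (b * (x1 - x)) <= Rabs b * (2 * M + 1)).
  { rewrite Rabs_mult. apply Rmult_le_compat_l; [apply Rabs_pos | apply Rabs_le; lra]. }
  apply Rabs_le_between in Hb0. apply Rabs_le_between in Hb1.
  assert (Hu0 : u = (w2 - b * x0) / c + b * (x0 - x) / c) by (unfold u; field; lra).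
  assert (Hu1 : u = (w2 - b * x1) / c + b * (x1 - x) / c) by (unfold u; field; lra).
  assert (D0 := Rdiv_le_compat_pos _ _ c Hc (proj1 Hb0)).
  assert (D1 := Rdiv_le_compat_pos _ _ c Hc (proj2 Hb1)).
  assert (Dt := Rdiv_le_compat_pos _ _ c Hc (proj2 Ht)).
  assert (0 <= t / c) by (apply Rdiv_le_0_compat; lra).
  assert (E : r = N + Rabs b * (2 * M + 1) / c + 1 / c) by (unfold r; field; lra).
  replace (- (Rabs b * (2 * M + 1)) / c) with (- (Rabs b * (2 * M + 1) / c)) in D0
    by (field; lra).
  assert (0 <= Rabs b * (2 * M + 1) / c).
  { apply Rdiv_le_0_compat; [apply Rmult_le_pos; [apply Rabs_pos |] |]; lra. }
  apply Phi_increment_lower; [lra | apply Rabs_le; lra | apply Rabs_le; lra].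
Qed.

Lemma orthant_shift_increment_edge (w1 w2 t M N m x0 x1 : R) :
  0 < a -> 0 < c -> 0 <= t <= 1 -> 0 <= M -> 1 <= m -> a <= m ->
  - M < x0 < M -> - M < x1 < M -> a * x0 <= w1 -> w1 < a * x1 ->
  - N < (w2 - b * x0) / c ->
  t / m * Phi (- N - Rabs b * (2 * M + 1) / c) * phi (M + 1) <= P (w1 + t) (w2 + t) - P w1 w2.
Proof.
  intros Ha Hc Ht HM Hm Ham Hx0 Hx1 A0 A1 Q0.
  assert (Tm : 0 <= t / m <= t).
  { split; [apply Rdiv_le_0_compat; lra |].
    apply (Rmult_le_reg_r m); [lra |]. replace (t / m * m) with t by (field; lra). nra. }
  assert (aTm : a * (t / m) <= t).
  { apply (Rmult_le_reg_r m); [lra |]. replace (a * (t / m) * m) with (a * t) by (field; lra).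
    nra. }
  set (xi := w1 / a). assert (Exi : a * xi = w1) by (unfold xi; field; lra).
  apply orthant_prob_shift_lower with (l := xi); try nra.
  { left; apply Phi_bounds. }
  intros x Hx. unfold K. rewrite !orthant_cond_pos by exact Hc.
  rewrite (indic_le_0 (a * x) w1), indic_le_1 by nra.
  rewrite Rmult_1_l, Rmult_0_l, Rminus_0_r.
  apply Rle_trans with (Phi ((w2 - b * x) / c)); [| apply Phi_le, Rdiv_le_compat_pos; lra].
  apply Phi_le.
  assert (Hb0 : Rabs (b * (x0 - x)) <= Rabs b * (2 * M + 1)).
  { rewrite Rabs_mult. apply Rmult_le_compat_l; [apply Rabs_pos | apply Rabs_le; nra]. }
  apply Rabs_le_between in Hb0.
  assert (D0 := Rdiv_le_compat_pos _ _ c Hc (proj1 Hb0)).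
  replace (- (Rabs b * (2 * M + 1)) / c) with (- (Rabs b * (2 * M + 1) / c)) in D0
    by (field; lra).
  replace ((w2 - b * x) / c) with ((w2 - b * x0) / c + b * (x0 - x) / c) by (field; lra).
  lra.
Qed.

Lemma orthant_shift_increment_degenerate (w1 w2 t M m x0 x1 : R) :
  c = 0 -> 0 < a -> 0 <= t <= 1 -> 0 <= M -> 1 <= m -> a <= m -> Rabs b <= m ->
  - M < x0 < M -> - M < x1 < M -> a * x0 <= w1 -> b * x0 <= w2 ->
  w1 < a * x1 \/ w2 < b * x1 ->
  t / m * phi (M + 1) <= P (w1 + t) (w2 + t) - P w1 w2.
Proof.
  intros Hc Ha Ht HM Hm Ham Hbm Hx0 Hx1 A0 B0 W.
  assert (Hs : 0 <= t / m <= 1).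
  { split; [apply Rdiv_le_0_compat; lra |].
    apply (Rmult_le_reg_r m); [lra |]. replace (t / m * m) with t by (field; lra). lra. }
  assert (Hsm : forall p, 0 <= p <= m -> p * (t / m) <= t).
  { intros p Hp. apply (Rmult_le_reg_r m); [lra |].
    replace (p * (t / m) * m) with (p * t) by (field; lra). nra. }
  assert (Hb0 := Rabs_pos b).
  destruct (two_halfline_gap a b w1 w2 t (t / m) M x0 x1) as [l [Hl1 [Hl2 Hl]]]; auto;
    try (apply Hsm; lra).
  replace (t / m * phi (M + 1)) with (t / m * 1 * phi (M + 1)) by ring.
  apply orthant_prob_shift_lower with (l := l); try lra.
  intros x Hx. destruct (Hl x Hx) as [Wx [Ax Bx]].
  unfold K. rewrite Hc, !orthant_cond_0, (indic_le_1 (a * x)), (indic_le_1 (b * x)) by lra.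
  destruct Wx; [rewrite (indic_le_0 (a * x)) | rewrite (indic_le_0 (b * x))]; lra.
Qed.

Lemma orthant_prob_shift_lower_uniform_pos (delta : R) :
  0 <= a -> 0 < c -> 0 < delta -> exists k, 0 < k /\ forall t w1 w2, 0 <= t <= 1 ->
    delta <= P w1 w2 <= 1 - delta -> k * t <= P (w1 + t) (w2 + t) - P w1 w2.
Proof.
  intros Ha Hc Hd.
  destruct (orthant_cond_witnesses delta Hd) as [M [HM W]].
  destruct (Phi_tails_small (delta / 2)) as [N [HN [TN1 TN2]]]; [lra |].
  set (m := Rmax 1 a). assert (Hm1 : 1 <= m) by apply Rmax_l. assert (Ham : a <= m) by apply Rmax_r.
  set (r := N + (Rabs b * (2 * M + 1) + 1) / c).
  set (g := Phi (- N - Rabs b * (2 * M + 1) / c)).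
  assert (R1 : 0 < phi r / c) by (apply Rdiv_lt_0_compat; [apply phi_pos | lra]).
  assert (R2 : 0 < g / m) by (apply Rdiv_lt_0_compat; [apply Phi_bounds | lra]).
  assert (PM := phi_pos (M + 1)).
  assert (Rm1 := Rmin_l (phi r / c) (g / m)). assert (Rm2 := Rmin_r (phi r / c) (g / m)).
  exists (phi (M + 1) * Rmin (phi r / c) (g / m)).
  split; [apply Rmult_lt_0_compat; [| apply Rmin_pos]; lra |].
  intros t w1 w2 Ht HP. destruct (W w1 w2 HP) as [x0 [x1 [Hx0 [Hx1 [K0 K1]]]]].
  unfold K in K0, K1. rewrite orthant_cond_pos in K0, K1 by exact Hc.
  assert (A0 : a * x0 <= w1).
  { apply Rnot_lt_le. intros A. rewrite indic_le_0 in K0 by exact A. lra. }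
  rewrite indic_le_1 in K0 by exact A0.
  assert (Q0 : - N < (w2 - b * x0) / c).
  { apply Rnot_le_lt. intros Q. apply Phi_le in Q. lra. }
  destruct (Rle_dec (a * x1) w1) as [A1 | A1].
  - rewrite indic_le_1 in K1 by exact A1.
    assert (Q1 : (w2 - b * x1) / c < N).
    { apply Rnot_le_lt. intros Q. apply Phi_le in Q. lra. }
    assert (X := orthant_shift_increment_interior w1 w2 t M N x0 x1 Ha Hc Ht
      ltac:(lra) ltac:(lra) Hx0 Hx1 A0 Q0 Q1). fold r in X.
    replace (t * (phi r / c) * phi (M + 1)) with (phi (M + 1) * (phi r / c) * t) in X by ring.
    eapply Rle_trans; [| exact X].
    apply Rmult_le_compat_r; [lra |]. apply Rmult_le_compat_l; lra.
  - assert (Ha' : 0 < a) by nra.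
    assert (X := orthant_shift_increment_edge w1 w2 t M N m x0 x1 Ha' Hc Ht
      ltac:(lra) Hm1 Ham Hx0 Hx1 A0 ltac:(lra) Q0). fold g in X.
    replace (t / m * g * phi (M + 1)) with (phi (M + 1) * (g / m) * t) in X by (field; lra).
    eapply Rle_trans; [| exact X].
    apply Rmult_le_compat_r; [lra |]. apply Rmult_le_compat_l; lra.
Qed.

Lemma orthant_prob_shift_lower_uniform_degenerate (delta : R) :
  c = 0 -> 0 < a -> 0 < delta -> exists k, 0 < k /\ forall t w1 w2, 0 <= t <= 1 ->
    delta <= P w1 w2 <= 1 - delta -> k * t <= P (w1 + t) (w2 + t) - P w1 w2.
Proof.
  intros Hc Ha Hd.
  destruct (orthant_cond_witnesses delta Hd) as [M [HM W]].
  set (m := Rmax 1 (Rmax a (Rabs b))).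
  assert (Hm1 : 1 <= m) by apply Rmax_l.
  assert (Ham : a <= m) by (eapply Rle_trans; [apply Rmax_l | apply Rmax_r]).
  assert (Hbm : Rabs b <= m) by (eapply Rle_trans; [apply Rmax_r | apply Rmax_r]).
  assert (PM := phi_pos (M + 1)).
  exists (phi (M + 1) / m). split; [apply Rdiv_lt_0_compat; lra |].
  intros t w1 w2 Ht HP. destruct (W w1 w2 HP) as [x0 [x1 [Hx0 [Hx1 [K0 K1]]]]].
  unfold K in K0, K1. rewrite Hc, orthant_cond_0 in K0, K1.
  assert (A0 : a * x0 <= w1).
  { apply Rnot_lt_le. intros A. rewrite indic_le_0 in K0 by exact A. lra. }
  assert (B0 : b * x0 <= w2).
  { apply Rnot_lt_le. intros B. rewrite (indic_le_0 (b * x0)) in K0 by exact B. lra. }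
  assert (W1 : w1 < a * x1 \/ w2 < b * x1).
  { destruct (Rlt_dec w1 (a * x1)) as [A | A]; [left; exact A |].
    destruct (Rlt_dec w2 (b * x1)) as [B | B]; [right; exact B |].
    rewrite !indic_le_1 in K1 by lra. lra. }
  assert (X := orthant_shift_increment_degenerate w1 w2 t M m x0 x1 Hc Ha Ht
    ltac:(lra) Hm1 Ham Hbm Hx0 Hx1 A0 B0 W1).
  replace (phi (M + 1) / m * t) with (t / m * phi (M + 1)) by (field; lra). exact X.
Qed.

End Orthant.

Lemma orthant_prob_shift_lower_uniform (a b c delta : R) :
  0 <= a -> 0 <= c -> (c = 0 -> 0 < a) -> 0 < delta ->
  exists k, 0 < k /\ forall t w1 w2, 0 <= t <= 1 ->
    delta <= orthant_prob a b c w1 w2 <= 1 - delta ->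
    k * t <= orthant_prob a b c (w1 + t) (w2 + t) - orthant_prob a b c w1 w2.
Proof.
  intros Ha Hc Hca Hd. destruct (Rlt_dec 0 c) as [Hc' | Hc'].
  - apply orthant_prob_shift_lower_uniform_pos; auto.
  - apply orthant_prob_shift_lower_uniform_degenerate; auto; lra.
Qed.

Lemma chol_a_pos (V : Mat2) : PSD V -> nonzero_mat V -> chol_c V = 0 -> 0 < chol_a V.
Proof.
  intros [Hs Hq] Hnz Hc. unfold chol_a, chol_c in *.
  assert (H11 : 0 <= m11 V) by (specialize (Hq 1 0); nra).
  assert (H22 : 0 <= m22 V) by (specialize (Hq 0 1); nra).
  destruct (Req_dec (m11 V) 0) as [E | E]; [exfalso | apply sqrt_lt_R0; lra].
  assert (E12 : m12 V = 0).
  { apply NNPP. intros N. specialize (Hq (- (m22 V + 1) / (2 * m12 V)) 1).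
    rewrite E, <- Hs in Hq.
    replace (- (m22 V + 1) / (2 * m12 V) * (0 * (- (m22 V + 1) / (2 * m12 V)) + m12 V * 1)
      + 1 * (m12 V * (- (m22 V + 1) / (2 * m12 V)) + m22 V * 1)) with (- 1) in Hq
      by (field; auto).
    lra. }
  rewrite E12, E in Hc. replace (m22 V - 0 * 0 / 0) with (m22 V) in Hc by (unfold Rdiv; ring).
  apply Hnz. repeat split; auto; [congruence |].
  destruct H22 as [H22 | H22]; auto. apply sqrt_lt_R0 in H22. lra.
Qed.

Lemma Un_cv_0_eventually_lt (u : nat -> R) (e : R) : (forall n, 0 < u n) -> Un_cv u 0 ->
  0 < e -> exists N, forall n, (N <= n)%nat -> u n < e.
Proof.
  intros Hpos Hcv He. destruct (Hcv e He) as [N HN]. exists N. intros n Hn.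
  specialize (HN n Hn). unfold R_dist in HN. specialize (Hpos n).
  rewrite Rminus_0_r, Rabs_right in HN by lra. exact HN.
Qed.

Theorem lemma1 :
  forall (V : Mat2) (eps : R),
    PSD V -> nonzero_mat V -> 0 < eps < 1 ->
    exists h : R,
      forall lam : nat -> R,
        (forall n, 0 < lam n) -> Un_cv lam 0 ->
        exists N : nat, forall n : nat, (N <= n)%nat ->
          forall z : R * R, PsiInv V (eps + lam n) z ->
            exists a : R * R, PsiInv V eps a /\
              z = (fst a + h * lam n, snd a + h * lam n).
Proof.
  intros V eps HV Hnz He.
  set (delta := Rmin ((1 - eps) / 2) eps).
  assert (D1 : delta <= (1 - eps) / 2) by apply Rmin_l.
  assert (D2 : delta <= eps) by apply Rmin_r.
  assert (Hd : 0 < delta) by (apply Rmin_pos; lra).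
  destruct (orthant_prob_shift_lower_uniform (chol_a V) (chol_b V) (chol_c V) delta)
    as [k [Hk Hinc]]; [apply sqrt_pos | apply sqrt_pos | apply chol_a_pos; auto | exact Hd |].
  exists (1 / k). intros lam Hpos Hcv.
  destruct (Un_cv_0_eventually_lt lam (Rmin delta k) Hpos Hcv) as [N HN];
    [apply Rmin_pos; lra |].
  exists N. intros n Hn z Hz. specialize (HN n Hn). assert (Hl := Hpos n).
  assert (L1 := Rlt_le_trans _ _ _ HN (Rmin_l delta k)).
  assert (L2 := Rlt_le_trans _ _ _ HN (Rmin_r delta k)).
  set (t := 1 / k * lam n).
  assert (Hkt : k * t = lam n) by (unfold t; field; lra).
  assert (Ht : 0 <= t <= 1) by (split; nra).
  exists (fst z - t, snd z - t). split.
  - unfold PsiInv in *. simpl. rewrite Psi_orthant_prob in *.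
    replace (- (fst z - t)) with (- fst z + t) by ring.
    replace (- (snd z - t)) with (- snd z + t) by ring.
    destruct (Rlt_dec (orthant_prob (chol_a V) (chol_b V) (chol_c V) (- fst z) (- snd z)) (1 - eps)).
    + assert (X := Hinc t (- fst z) (- snd z) Ht ltac:(lra)). lra.
    + assert (X := orthant_prob_shift_mono (chol_a V) (chol_b V) (chol_c V) (- fst z) (- snd z) t ltac:(lra)).
      lra.
  - destruct z as [z1 z2]. simpl. fold t. f_equal; ring.
Qed.
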